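(* In the setting below, for all $n\in\mathbb{N}_0$, $$d(t_{2n+2})\le\frac{e^{K(t_{2n+2}-t_{2n+1})}}{2-e^{K(t_{2n+2}-t_{2n+1})}}\,d(t_{2n+1}).$$
   Context: Setting: $N\ge2$; $\psi:\mathbb{R}^d\times\mathbb{R}^d\to\mathbb{R}$ positive, bounded, continuous, $K:=\|\psi\|_\infty$; $\{t_n\}_{n\in\mathbb{N}_0}$ increasing, nonnegative, $t_0=0$, $t_n\to\infty$; $\alpha(0)=1$, $\alpha=1$ on $(t_{2n},t_{2n+1})$, $\alpha=-1$ on $[t_{2n+1},t_{2n+2}]$; $\{x_i\}$ solves $x_i'(t)=\frac1{N-1}\sum_{j\ne i}\alpha(t)\psi(x_i(t),x_j(t))(x_j(t)-x_i(t))$, $t>0$, $x_i(0)=x_i^0\in\mathbb{R}^d$ (continuous, $C^1$ on each $(t_n,t_{n+1})$). $d(t):=\max_{i,j}|x_i(t)-x_j(t)|$. Standing assumptions: $t_{2n+2}-t_{2n+1}<\frac{\ln 2}{K}$ for all $n$; $\sum_{p\ge0}\ln\frac{e^{K(t_{2p+2}-t_{2p+1})}}{2-e^{K(t_{2p+2}-t_{2p+1})}}<\infty$; $\sum_{p\ge0}\ln\max\{1-e^{-K(t_{2p+1}-t_{2p})},1-\frac{\psi_0}{K}(1-e^{-K(t_{2p+1}-t_{2p})})\}=-\infty$, with $\psi_0=\min_{|y|,|z|\le M^0}\psi(y,z)$, $M^0=e^{K\sum_{p}(t_{2p+2}-t_{2p+1})}\max_i|x_i^0|$. *)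

(* R : realType, R^d rendered as row vectors 'rV[R]_d
   equipped (explicitly) with the Euclidean norm. *)
From HB Require Import structures.
From mathcomp Require Import all_boot all_order all_algebra.
From mathcomp Require Import all_classical all_reals all_analysis.
Set Implicit Arguments. Unset Strict Implicit. Unset Printing Implicit Defensive.
Import Order.TTheory GRing.Theory Num.Theory.
Import numFieldNormedType.Exports.
Local Open Scope classical_set_scope.
Local Open Scope ring_scope.

Definition enorm (R : realType) (d : nat) (v : 'rV[R]_d) : R :=
  Num.sqrt (\sum_(k < d) v ord0 k ^+ 2).

(* K := ||psi||_oo (psi is positive, so this is the supremum of its values) *)
Definition supnorm (R : realType) (d : nat) (psi : 'rV[R]_d -> 'rV[R]_d -> R) : R :=
  sup [set psi p.1 p.2 | p in [set: 'rV[R]_d * 'rV[R]_d]].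

Definition alpha (R : realType) (tn : nat -> R) (t : R) : R :=
  if `[< exists n, tn (2 * n + 1)%N <= t <= tn (2 * n + 2)%N >] then -1 else 1.

Definition diam (R : realType) (N d : nat) (x : 'I_N -> R -> 'rV[R]_d) (t : R) : R :=
  \big[Num.max/0]_(i < N) \big[Num.max/0]_(j < N) enorm (x i t - x j t).

Definition tau (R : realType) (tn : nat -> R) (p : nat) : R :=
  tn (2 * p + 2)%N - tn (2 * p + 1)%N.

Definition sigma (R : realType) (tn : nat -> R) (p : nat) : R :=
  tn (2 * p + 1)%N - tn (2 * p)%N.

Definition M0 (R : realType) (N d : nat) (K : R) (tn : nat -> R) (x0 : 'I_N -> 'rV[R]_d) : R :=
  expR (K * limn (series (tau tn))) * \big[Num.max/0]_(i < N) enorm (x0 i).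

(* psi_0 = min_{|y|,|z| <= M^0} psi(y,z) (a minimum by compactness) *)
Definition psi0 (R : realType) (d : nat) (psi : 'rV[R]_d -> 'rV[R]_d -> R) (M : R) : R :=
  inf [set psi p.1 p.2 | p in [set p : 'rV[R]_d * 'rV[R]_d | enorm p.1 <= M /\ enorm p.2 <= M]].

(* Each agent moves towards a weighted average of the others with weights
   |alpha psi| <= K, so its speed is at most K d(t).  Hence d grows at most like
   e^{2K(t-a)} on any interval [a, b] where the ODE holds: at the first time s
   where d would touch the barrier (d(a) + eps) e^{2K(t-a)}, project x_i - x_j
   onto w = x_i(s) - x_j(s) for a pair realising d(s); this projection minus |w|
   times the barrier is nonincreasing on [a, s], yet it is negative at a and
   nonnegative at s.  On the backward interval [t_{2n+1}, t_{2n+2}] the factor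
   E = e^{K tau} is < 2, and E^2 <= E / (2 - E). *)

From HB Require Import structures.
From mathcomp Require Import all_boot all_order all_algebra.
From mathcomp Require Import all_classical all_reals all_analysis.
From mathcomp Require Import ring lra.
Set Implicit Arguments. Unset Strict Implicit. Unset Printing Implicit Defensive.
Import Order.TTheory GRing.Theory Num.Theory.
Import numFieldNormedType.Exports.
Local Open Scope classical_set_scope.
Local Open Scope ring_scope.

Section EuclideanNorm.
Variables (R : realType) (d : nat).
Implicit Types (u v w : 'rV[R]_d) (a : R).

Definition inner u w : R := \sum_(k < d) u ord0 k * w ord0 k.

Lemma innerC u w : inner u w = inner w u.
Proof. by apply: eq_bigr => k _; rewrite mulrC. Qed.

Lemma innerDl u v w : inner (u + v) w = inner u w + inner v w.
Proof. by rewrite /inner -big_split; apply: eq_bigr => k _; rewrite !mxE mulrDl. Qed.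

Lemma innerBl u v w : inner (u - v) w = inner u w - inner v w.
Proof. by rewrite /inner -sumrB; apply: eq_bigr => k _; rewrite !mxE mulrBl. Qed.

Lemma enorm_ge0 u : 0 <= enorm u.
Proof. exact: sqrtr_ge0. Qed.

Lemma enorm_sqr u : enorm u ^+ 2 = inner u u.
Proof.
rewrite sqr_sqrtr; last by apply: sumr_ge0 => k _; exact: sqr_ge0.
by apply: eq_bigr => k _; rewrite expr2.
Qed.

(* Lagrange's identity: the sum of all squared 2x2 minors of (u, w) is twice
   the Cauchy-Schwarz defect. *)
Lemma inner_sqr_le u w : inner u w ^+ 2 <= inner u u * inner w w.
Proof.
pose minor k l := u ord0 k * w ord0 l - u ord0 l * w ord0 k.
have lagrange : \sum_(k < d) \sum_(l < d) minor k l ^+ 2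
    = (inner u u * inner w w - inner u w ^+ 2) *+ 2.
  pose A k l := u ord0 k * u ord0 k * (w ord0 l * w ord0 l).
  pose B k l := u ord0 k * w ord0 k * (u ord0 l * w ord0 l).
  transitivity (\sum_(k < d) \sum_(l < d) (A k l + A l k - B k l *+ 2)).
    by apply: eq_bigr => k _; apply: eq_bigr => l _; rewrite /minor /A /B; ring.
  under eq_bigr do rewrite sumrB big_split /= sumrMnl.
  rewrite sumrB big_split /= sumrMnl [X in _ + X - _]exchange_big /=.
  by rewrite /inner expr2 !big_distrlr /=; ring.
have : 0 <= \sum_(k < d) \sum_(l < d) minor k l ^+ 2.
  by apply: sumr_ge0 => k _; apply: sumr_ge0 => l _; exact: sqr_ge0.
by rewrite lagrange mulr2n => ?; lra.
Qed.

Lemma ler_norm_inner u w : `|inner u w| <= enorm u * enorm w.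
Proof.
rewrite -ler_sqr ?nnegrE ?mulr_ge0 ?enorm_ge0 //.
by rewrite real_normK ?num_real // exprMn !enorm_sqr inner_sqr_le.
Qed.

Lemma enormD_le u v : enorm (u + v) <= enorm u + enorm v.
Proof.
rewrite -ler_sqr ?nnegrE ?addr_ge0 ?enorm_ge0 //.
rewrite enorm_sqr innerDl !(innerC _ (u + v)) !innerDl -!enorm_sqr (innerC v).
have := ler_norm_inner u v; have := ler_norm (inner u v); lra.
Qed.

Lemma enormZ a u : enorm (a *: u) = `|a| * enorm u.
Proof.
rewrite -sqrtr_sqr -sqrtrM ?sqr_ge0 // mulr_sumr.
by congr Num.sqrt; apply: eq_bigr => k _; rewrite mxE exprMn.
Qed.

Lemma enorm_sum_le (I : Type) (r : seq I) (P : pred I) (F : I -> 'rV[R]_d) :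
  enorm (\sum_(i <- r | P i) F i) <= \sum_(i <- r | P i) enorm (F i).
Proof.
elim/big_rec2: _ => [|i y s _ les].
  by rewrite /enorm big1 ?sqrtr0 // => k _; rewrite mxE expr0n.
by apply: le_trans (enormD_le _ _) _; rewrite lerD2l.
Qed.

Lemma enorm_continuous : continuous (@enorm R d).
Proof.
move=> u; apply: continuous_comp (@sqrt_continuous R _).
apply: cvg_big; [exact: add_continuous | exact: nbhs_filter |].
move=> k _; apply: continuous_comp (@exprn_continuous R 2 _).
exact: coord_continuous.
Qed.

Lemma inner_continuous (f : R -> 'rV[R]_d) w t :
  {for t, continuous f} -> {for t, continuous (fun s => inner (f s) w)}.
Proof.
move=> cf; apply: cvg_big => //; first exact: add_continuous.
move=> k _; apply: continuousM; last exact: cvg_cst.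
exact: continuous_comp cf (@coord_continuous R 1 d ord0 k (f t)).
Qed.

Lemma is_derive_inner (f : R -> 'rV[R]_d) w t :
  derivable f t 1 -> is_derive t 1 (fun s => inner (f s) w) (inner ('D_1 f t) w).
Proof.
move=> df; rewrite /inner (derive_mx df).
under eq_bigr do rewrite mxE.
rewrite -fct_sumE; apply: is_derive_sum => k.
have /derivableP dfk := (derivable_mxP f t 1).1 df ord0 k.
have := is_deriveM dfk (is_derive_cst (w ord0 k) t 1).
by rewrite scaler0 add0r => h; apply: is_derive_eq h _; rewrite mulrC.
Qed.

End EuclideanNorm.

Section Diameter.
Variables (R : realType) (N d : nat) (x : 'I_N -> R -> 'rV[R]_d).

Lemma diam_ge0 t : 0 <= diam x t.
Proof. exact: bigmax_ge_id. Qed.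

Lemma enorm_le_diam t i j : enorm (x i t - x j t) <= diam x t.
Proof.
apply: le_trans (le_bigmax _ _ i).
exact: (le_bigmax _ (fun j => enorm (x i t - x j t)) j).
Qed.

Lemma diam_lt t c :
  0 < c -> (forall i j, enorm (x i t - x j t) < c) -> diam x t < c.
Proof. by move=> c_gt0 lt_c; apply: bigmax_lt => // i _; apply: bigmax_lt. Qed.

Lemma diam_continuous t :
  (forall i, {for t, continuous (x i)}) -> {for t, continuous (diam x)}.
Proof.
move=> x_cont; apply: cvg_big => //; first exact: max_continuous.
move=> i _; apply: cvg_big => //; first exact: max_continuous.
move=> j _; exact: continuous_comp (continuousB (x_cont i) (x_cont j))
  (@enorm_continuous R d _).
Qed.

End Diameter.

Lemma first_crossing (R : realType) (f : R -> R) (a b : R) :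
    a <= b -> (forall t, a <= t <= b -> {for t, continuous f}) ->
    f a < 0 -> 0 <= f b ->
  exists2 s, a < s <= b & 0 <= f s /\ forall t, a <= t < s -> f t < 0.
Proof.
move=> ab f_cont fa_lt0 fb_ge0.
pose S := [set s | a <= s <= b /\ 0 <= f s].
have Sb : S b by rewrite /S /= lexx ab.
have S_lb : lbound S a by move=> s [/andP[]].
have S_hlb : has_lbound S by exists a.
have S_inf : has_inf S by split; [exists b | exact: S_hlb].
set s := inf S.
have a_le_s : a <= s := lb_le_inf (ex_intro _ b Sb) S_lb.
have s_le_b : s <= b := ge_inf S_hlb Sb.
have before_s t : a <= t < s -> f t < 0.
  case/andP=> a_le_t t_lt_s; rewrite ltNge; apply/negP => ft_ge0.
  have St : S t by split => //; rewrite a_le_t (ltW (lt_le_trans t_lt_s s_le_b)).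
  by move: (ge_inf S_hlb St); rewrite leNgt t_lt_s.
have fs_ge0 : 0 <= f s.
  rewrite leNgt; apply/negP => fs_lt0.
  have /nbhs_ballP[e e_gt0 near_s] : \forall t \near s, f t < 0.
    by apply: (cvgr_lt _ (f_cont s _) _ fs_lt0); rewrite a_le_s s_le_b.
  have [t St st] := inf_adherent e_gt0 S_inf.
  have /near_s : ball s e t.
    by rewrite /ball /= distrC ger0_norm ?subr_ge0 ?(ge_inf S_hlb St) //; lra.
  by case: St => _ /le_lt_trans/[apply]; rewrite ltxx.
exists s; last by split.
rewrite s_le_b andbT lt_neqAle a_le_s andbT.
by apply: contra_ltN fa_lt0 => /eqP ->.
Qed.

Section DiameterGrowth.
Variables (R : realType) (N d : nat) (x : 'I_N -> R -> 'rV[R]_d) (K a b : R).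
Hypothesis K_ge0 : 0 <= K.
Hypothesis x_cont : forall i t, a <= t <= b -> {for t, continuous (x i)}.
Hypothesis x_der : forall i t, a < t < b -> derivable (x i) t 1.
Hypothesis speed_le :
  forall i t, a < t < b -> enorm ('D_1 (x i) t) <= K * diam x t.

Let barrier (C t : R) : R := C * expR (K *+ 2 * (t - a)).

Let is_derive_barrier (C t : R) : is_derive t 1 (barrier C) (K *+ 2 * barrier C t).
Proof.
have lin : is_derive t 1 (fun s : R => K *+ 2 * (s - a)) (K *+ 2).
  have := is_deriveZ (K *+ 2)
    (is_deriveB (@is_derive_id _ _ t 1) (is_derive_cst a t 1)).
  by move=> h; apply: is_derive_eq h _; rewrite subr0 [_ *: _]mulr1.
have := is_deriveZ C (is_derive1_comp (is_derive_expR _) lin).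
by rewrite /barrier => h; apply: is_derive_eq h _; rewrite [_ *: _]mulrA mulrC.
Qed.

Let barrier_continuous (C t : R) : {for t, continuous (barrier C)}.
Proof.
have [der_t _] := is_derive_barrier C t.
exact/differentiable_continuous/derivable1_diffP.
Qed.

Lemma projected_gap_le C i j w s :
    a < s <= b -> (forall t, a <= t < s -> diam x t < barrier C t) ->
  inner (x i s - x j s) w - enorm w * barrier C s
    <= inner (x i a - x j a) w - enorm w * barrier C a.
Proof.
move=> /andP[a_lt_s s_le_b] below.
pose h t := inner (x i t) w - inner (x j t) w - enorm w * barrier C t.
have inside t : t \in `]a, s[ -> a < t < b.
  by rewrite in_itv /= => /andP[-> /lt_le_trans]; apply.
have h_der t : t \in `]a, s[ -> is_derive t 1 h
    (inner ('D_1 (x i) t) w - inner ('D_1 (x j) t) w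
       - enorm w * (K *+ 2 * barrier C t)).
  move=> /inside t_ab; apply: is_deriveB; last exact: is_deriveZ.
  by apply: is_deriveB; apply: is_derive_inner; apply: x_der.
have h'_le0 t : t \in `]a, s[ -> (h^`())%classic t <= 0.
  move=> t_as; rewrite derive1E; have [_ ->] := h_der t t_as.
  have t_ab := inside t t_as.
  have w_ge0 := enorm_ge0 w.
  have proj_le k : `|inner ('D_1 (x k) t) w| <= K * barrier C t * enorm w.
    apply: le_trans (ler_norm_inner _ _) _; apply: ler_wpM2r => //.
    apply: le_trans (speed_le k t_ab) _; apply: ler_wpM2l => //; apply/ltW/below.
    by move: t_as; rewrite in_itv /= => /andP[/ltW -> ->].
  have := ler_norm (inner ('D_1 (x i) t) w).
  have := ler_norm (- inner ('D_1 (x j) t) w); rewrite normrN.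
  have := proj_le i; have := proj_le j; lra.
have h_cont : {within `[a, s], continuous h}.
  apply: continuous_in_subspaceT => t; rewrite inE /= in_itv /= => t_as.
  have t_ab : a <= t <= b by case/andP: t_as => -> /le_trans; apply.
  have proj_cont k := inner_continuous (w := w) (x_cont (i := k) t_ab).
  have := continuousB (continuousB (proj_cont i) (proj_cont j))
    (continuousZl_tmp (k := enorm w) (@barrier_continuous C t)).
  exact.
have h_mono := ler0_derive1_le_cc
  (fun t t_as => @ex_derive _ _ _ _ _ _ _ (h_der t t_as)) h'_le0 h_cont.
have a_in : a \in `[a, s] by rewrite in_itv /= lexx ltW.
have s_in : s \in `[a, s] by rewrite in_itv /= lexx ltW.
by rewrite !innerBl; exact: (h_mono s a s_in a_in (ltW a_lt_s)).
Qed.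

Lemma diam_lt_barrier C s :
  diam x a < C -> a <= s <= b -> diam x s < barrier C s.
Proof.
move=> Da_lt /andP[a_le_s s_le_b]; rewrite ltNge; apply/negP => crossed.
have g_gt0 t : 0 < barrier C t.
  by apply: mulr_gt0; [exact: le_lt_trans (diam_ge0 x a) Da_lt | exact: expR_gt0].
have [s0 /andP[a_lt_s0 s0_le_s] [crossed0 below]] :
    exists2 s0, a < s0 <= s & 0 <= diam x s0 - barrier C s0 /\
      forall t, a <= t < s0 -> diam x t - barrier C t < 0.
  apply: first_crossing => //; last by rewrite subr_ge0.
    move=> t /andP[a_le_t t_le_s].
    apply: continuousB; last exact: barrier_continuous.
    by apply: diam_continuous => i; apply: x_cont; rewrite a_le_t (le_trans t_le_s).
  by rewrite /barrier subrr mulr0 expR0 mulr1 subr_lt0.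
have [i [j gap]] : exists i j, barrier C s0 <= enorm (x i s0 - x j s0).
  apply: contrapT => no_gap; move: crossed0; rewrite subr_ge0 leNgt.
  apply/negP/negPn; apply: diam_lt => // i j.
  by rewrite ltNge; apply/negP => ge; apply: no_gap; exists i, j.
set w := x i s0 - x j s0.
have w_gt0 : 0 < enorm w := lt_le_trans (g_gt0 s0) gap.
have := @projected_gap_le C i j w s0.
rewrite a_lt_s0 (le_trans s0_le_s s_le_b) -/w -enorm_sqr => /(_ isT).
have ga : barrier C a = C by rewrite /barrier subrr mulr0 expR0 mulr1.
have start : inner (x i a - x j a) w <= diam x a * enorm w.
  apply: le_trans (ler_norm _) _; apply: le_trans (ler_norm_inner _ _) _.
  by apply: ler_wpM2r; [exact: enorm_ge0 | exact: enorm_le_diam].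
have below' t : a <= t < s0 -> diam x t < barrier C t.
  by move=> t_as; rewrite -subr_lt0; exact: below.
have gap_ge0 : 0 <= enorm w * (enorm w - barrier C s0).
  by rewrite mulr_ge0 ?subr_ge0 // ltW.
have Da_w_lt : diam x a * enorm w < C * enorm w by rewrite ltr_pM2r.
move=> /(_ below'); rewrite ga expr2; lra.
Qed.

Lemma diam_le_expR : a <= b -> diam x b <= expR (K *+ 2 * (b - a)) * diam x a.
Proof.
move=> a_le_b; set E := expR _; have E_gt0 : 0 < E := expR_gt0 _.
apply/ler_addgt0Pr => e e_gt0.
have := @diam_lt_barrier (diam x a + e / E) b.
rewrite ltrDl divr_gt0 // a_le_b lexx => /(_ isT isT) /ltW.
by rewrite /barrier -/E mulrDl divfK ?gt_eqF // [diam x a * E]mulrC.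
Qed.

End DiameterGrowth.

Lemma consensus_speed_le (R : realType) (N d : nat) (i : 'I_N) (c : 'I_N -> R)
    (y : 'I_N -> 'rV[R]_d) (K D : R) :
    (1 < N)%N -> (forall j, `|c j| <= K) -> (forall j, enorm (y j - y i) <= D) ->
  enorm ((N.-1%:R)^-1 *: \sum_(j < N | j != i) c j *: (y j - y i)) <= K * D.
Proof.
move=> N_gt1 c_le y_le.
have term_le j : enorm (c j *: (y j - y i)) <= K * D.
  by rewrite enormZ; apply: ler_pM; rewrite ?normr_ge0 ?enorm_ge0.
have N1_gt0 : 0 < N.-1%:R :> R by rewrite ltr0n -ltnS prednK // ltnW.
rewrite enormZ ger0_norm ?invr_ge0 ?(ltW N1_gt0) // ler_pdivrMl //.
apply: le_trans (enorm_sum_le _ _ _) _.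
apply: le_trans (ler_sum _ (fun j _ => term_le j)) _.
rewrite (eq_bigl (fun j => j \in predC1 i)) // sumr_const cardC1 card_ord.
by rewrite mulr_natl.
Qed.

Lemma le_supnorm (R : realType) (d : nat) (psi : 'rV[R]_d -> 'rV[R]_d -> R) :
  (exists B, forall y z, psi y z <= B) -> forall y z, psi y z <= supnorm psi.
Proof.
move=> [B psi_le] y z; apply: sup_upper_bound; last by exists (y, z).
by split; [exists (psi y z), (y, z) | exists B => _ [p _ <-]].
Qed.

Lemma normr_alpha (R : realType) (tn : nat -> R) t : `|alpha tn t| = 1.
Proof. by rewrite /alpha; case: ifP; rewrite ?normrN normr1. Qed.

Lemma continuous_within_ge_at (R : realType) (T : topologicalType)
    (f : R -> T) c t :
  {within [set s | c <= s], continuous f} -> c < t -> {for t, continuous f}.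
Proof.
move=> f_cont c_lt_t.
have : {within [set s | c < s], continuous f}.
  by apply: continuous_subspaceW f_cont => s /= /ltW.
rewrite continuous_open_subspace; last exact: open_gt.
by apply; rewrite inE.
Qed.

(* [E * (2 - E) <= 1] is [(E - 1) ^+ 2 >= 0]. *)
Lemma sqr_le_div_two_sub (R : realFieldType) (E : R) :
  0 <= E < 2 -> E ^+ 2 <= E / (2 - E).
Proof.
case/andP=> E_ge0 E_lt2; rewrite ler_pdivlMr ?subr_gt0 //.
have : 0 <= E * (E - 1) ^+ 2 by rewrite mulr_ge0 ?sqr_ge0.
by rewrite !expr2 => ?; nra.
Qed.

Unset Implicit Arguments.
Set Strict Implicit.
Theorem lemma3p12 (R : realType) (N d : nat)
  (psi : 'rV[R]_d -> 'rV[R]_d -> R) (tn : nat -> R)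
  (x : 'I_N -> R -> 'rV[R]_d) :
  (2 <= N)%N ->
  (* psi positive, bounded, continuous *)
  (forall y z, 0 < psi y z) ->
  (exists B : R, forall y z, psi y z <= B) ->
  continuous (fun p : 'rV[R]_d * 'rV[R]_d => psi p.1 p.2) ->
  (* the switching times *)
  tn 0%N = 0 ->
  (forall n, tn n < tn n.+1) ->
  tn @ \oo --> +oo ->
  (* x_i continuous on [0, oo), C^1 on each (t_n, t_{n+1}), solving the ODE there *)
  (forall i, {within [set t : R | 0 <= t], continuous (x i)}) ->
  (forall i n t, tn n < t < tn n.+1 ->
     derivable (x i) t 1 /\
     {in [set s | tn n < s < tn n.+1], continuous ('D_1 (x i))} /\
     'D_1 (x i) t = (N.-1%:R)^-1 *:
        \sum_(j < N | j != i)
           (alpha tn t * psi (x i t) (x j t)) *: (x j t - x i t)) ->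
  (* standing assumptions *)
  (forall n, tau tn n < ln 2 / supnorm psi) ->
  cvgn (series (fun p => ln (expR (supnorm psi * tau tn p)
                              / (2 - expR (supnorm psi * tau tn p))))) ->
  series (fun p => ln (Num.max (1 - expR (- (supnorm psi * sigma tn p)))
          (1 - psi0 psi (M0 (supnorm psi) tn (fun i => x i 0)) / supnorm psi
                 * (1 - expR (- (supnorm psi * sigma tn p))))))
     @ \oo --> -oo ->
  (* conclusion *)
  forall n : nat,
    diam x (tn (2 * n + 2)%N) <=
      expR (supnorm psi * tau tn n) / (2 - expR (supnorm psi * tau tn n))
      * diam x (tn (2 * n + 1)%N).
Proof.
move=> N_ge2 psi_gt0 psi_bdd _ t0 t_incr _ x_cont x_ode tau_lt _ _ n.
have psi_le := le_supnorm psi_bdd; set K := supnorm psi in psi_le tau_lt *.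
have K_gt0 : 0 < K := lt_le_trans (psi_gt0 0 0) (psi_le 0 0).
have t_ge0 m : 0 <= tn m.
  by elim: m => [|m IH]; rewrite ?t0 // (le_trans IH) ?ltW.
have E_lt2 : expR (K * tau tn n) < 2.
  by rewrite -[2](@lnK R) ?posrE // ltr_expR -ltr_pdivlMl // mulrC.
rewrite /tau addnS in E_lt2 *; set m := (2 * n + 1)%N in E_lt2 *.
have a_gt0 : 0 < tn m by rewrite /m addn1; exact: le_lt_trans (t_ge0 _) (t_incr _).
apply: le_trans (diam_le_expR (ltW K_gt0) _ _ _ (ltW (t_incr m))) _.
- move=> i t /andP[a_le_t _].
  exact: continuous_within_ge_at (x_cont i) (lt_le_trans a_gt0 a_le_t).
- by move=> i t t_in; case: (x_ode i m t t_in).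
- move=> i t t_in; have [_ [_ ->]] := x_ode i m t t_in.
  apply: consensus_speed_le => // j; last exact: enorm_le_diam.
  by rewrite normrM normr_alpha mul1r ger0_norm ?psi_le ?ltW.
apply: ler_wpM2r; first exact: diam_ge0.
rewrite -[K *+ 2]mulr_natl -mulrA expRM_natl.
by rewrite sqr_le_div_two_sub // expR_ge0 E_lt2.
Qed.
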